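(* Let $H$ be a standard finitary set functor with a presentation $\varepsilon\colon H_\Sigma\to H$, and let $Y$ be a set. Then the relation $\sim^*_Y$ restricted to $C_\Sigma Y$ is a congruence of $\Sigma$-algebras, the quotient $\Sigma$-algebra $C_\Sigma Y/\mathord{\sim^*_Y}$ satisfies all $\varepsilon$-equations, and with the induced $H$-algebra structure and the map $y\mapsto[y]$ it is a free corecursive $H$-algebra on $Y$: $CY\cong C_\Sigma Y/\mathord{\sim^*_Y}$.
   Context: Finitary set functor: $HX=\bigcup HY$ over finite $Y\subseteq X$. Standard: preserves inclusions and finite intersections. $H_\Sigma X=\coprod_n\Sigma_n\times X^n$ for a finitary signature $\Sigma$; a presentation is a natural transformation $\varepsilon\colon H_\Sigma\to H$ with surjective components. An $\varepsilon$-equation is $\sigma(x_1,\dots,x_n)=\tau(z_1,\dots,z_m)$ ($\sigma\in\Sigma_n,\tau\in\Sigma_m$, variables not necessarily distinct) such that $\varepsilon_X$ identifies both sides for $X=\{x_1,\dots,z_m\}$. A $\Sigma$-algebra $b\colon H_\Sigma B\to B$ satisfying all $\varepsilon$-equations is of the form $b=a\cdot\varepsilon_B$ for a unique $H$-algebra $a\colon HB\to B$ (the induced $H$-algebra structure). A $\Sigma$-tree over $Y$ is a rooted ordered (possibly infinite) tree whose nodes with $n>0$ children are labeled by symbols of $\Sigma_n$ and whose leaves are labeled by constants in $\Sigma_0$ or elements of $Y$; $T_\Sigma Y$ is the $\Sigma$-algebra of all of them (operations by tree-tupling), $F_\Sigma Y$ the subalgebra of finite ones, and $C_\Sigma Y$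 the subalgebra of those with only finitely many leaves labeled in $Y$. For a set $Z$, $\sim_Z$ is the smallest congruence on $F_\Sigma Z$ containing all pairs obtained from an $\varepsilon$-equation $\sigma(x_1,\dots,x_n)=\tau(z_1,\dots,z_m)$ by substituting finite $\Sigma$-trees over $Z$ for its variables. For a tree $t$ and $k<\omega$, $\partial_kt$ is the finite tree over $Y\cup\{\bot\}$ ($\bot\notin Y$) obtained by deleting all nodes of depth $>k$ and relabeling all nodes of depth $k$ by $\bot$. For $t,s\in T_\Sigma Y$: $t\sim^*_Ys$ iff $\partial_kt\sim_{Y\cup\{\bot\}}\partial_ks$ for all $k<\omega$. An $H$-algebra $a\colon HA\to A$ is corecursive if every coalgebra $e\colon X\to HX$ admits a unique $s$ with $s=a\cdot Hs\cdot e$; a free corecursive algebra $CY$ on $Y$ is a corecursive algebra with a map $Y\to CY$ through which every map from $Y$ to a corecursive algebra factors uniquely via an $H$-algebra morphism. *)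

(* Sets are modelled by Types, subsets by predicates. *)
From Stdlib Require Import List Arith Fin.
Import ListNotations.

Definition injective {A B : Type} (f : A -> B) : Prop :=
  forall x y, f x = f y -> x = y.

Definition surjective {A B : Type} (f : A -> B) : Prop :=
  forall y, exists x, f x = y.

Definition is_functor (H : Type -> Type)
  (map : forall X Z : Type, (X -> Z) -> H X -> H Z) : Prop :=
  (forall X (u : H X), map X X (fun x => x) u = u) /\
  (forall X Z W (f : X -> Z) (g : Z -> W) (u : H X),
      map X W (fun x => g (f x)) u = map Z W g (map X Z f u)).

(* finitary: every element of HX lies in HY for some finite Y ⊆ X
   (Y = the elements listed in l, included via the projection) *)
Definition finitary (H : Type -> Type)
  (map : forall X Z : Type, (X -> Z) -> H X -> H Z) : Prop :=
  forall X (u : H X), exists (l : list X) (v : H {x : X | In x l}),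
    map _ X (@proj1_sig X (fun x => In x l)) v = u.

(* standard: preserves inclusions (= injections, including those with
   empty domain) and finite intersections (pullbacks of injections) *)
Definition standard (H : Type -> Type)
  (map : forall X Z : Type, (X -> Z) -> H X -> H Z) : Prop :=
  (forall A X (f : A -> X), injective f -> injective (map A X f)) /\
  (forall A B X (f : A -> X) (g : B -> X), injective f -> injective g ->
     forall (a : H A) (b : H B), map A X f a = map B X g b ->
     exists c : H {p : A * B | f (fst p) = g (snd p)},
       map _ A (fun p => fst (proj1_sig p)) c = a /\
       map _ B (fun p => snd (proj1_sig p)) c = b).

(* a finitary signature: Sig n = set of n-ary operation symbols *)
Definition HSig (Sig : nat -> Type) (X : Type) : Type :=
  {n : nat & (Sig n * (Fin.t n -> X))%type}.

Definition HSig_map (Sig : nat -> Type) {X Z : Type} (f : X -> Z)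
  (u : HSig Sig X) : HSig Sig Z :=
  match u with existT _ n (s, xs) => existT _ n (s, fun i => f (xs i)) end.

Definition presentation (Sig : nat -> Type) (H : Type -> Type)
  (map : forall X Z : Type, (X -> Z) -> H X -> H Z)
  (eps : forall X, HSig Sig X -> H X) : Prop :=
  (forall X Z (f : X -> Z) (u : HSig Sig X),
      eps Z (HSig_map Sig f u) = map X Z f (eps X u)) /\
  (forall X, surjective (eps X)).

Definition occurs (Sig : nat -> Type) {V : Type} (v : V) (u : HSig Sig V) : Prop :=
  match u with existT _ n (_, xs) => exists i, xs i = v end.

Definition eps_equation (Sig : nat -> Type) (H : Type -> Type)
  (eps : forall X, HSig Sig X -> H X) (V : Type) (l r : HSig Sig V) : Prop :=
  eps V l = eps V r /\ (forall v : V, occurs Sig v l \/ occurs Sig v r).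

Definition satisfies_eps_equations (Sig : nat -> Type) (H : Type -> Type)
  (eps : forall X, HSig Sig X -> H X) (B : Type) (b : HSig Sig B -> B) : Prop :=
  forall (V : Type) (l r : HSig Sig V), eps_equation Sig H eps V l r ->
    forall v : V -> B, b (HSig_map Sig v l) = b (HSig_map Sig v r).

Inductive ftree (Sig : nat -> Type) (Z : Type) : Type :=
| fleaf : Z -> ftree Sig Z
| fnode : forall n, Sig n -> (Fin.t n -> ftree Sig Z) -> ftree Sig Z.
Arguments fleaf {Sig Z} _.
Arguments fnode {Sig Z} n _ _.

Definition fsubst (Sig : nat -> Type) {V Z : Type} (th : V -> ftree Sig Z)
  (u : HSig Sig V) : ftree Sig Z :=
  match u with existT _ n (s, xs) => fnode n s (fun i => th (xs i)) end.

Inductive simZ (Sig : nat -> Type) (H : Type -> Type)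
  (eps : forall X, HSig Sig X -> H X) (Z : Type) :
  ftree Sig Z -> ftree Sig Z -> Prop :=
| simZ_ax : forall (V : Type) (l r : HSig Sig V) (th : V -> ftree Sig Z),
    eps_equation Sig H eps V l r ->
    simZ Sig H eps Z (fsubst Sig th l) (fsubst Sig th r)
| simZ_refl : forall t, simZ Sig H eps Z t t
| simZ_sym : forall t s, simZ Sig H eps Z t s -> simZ Sig H eps Z s t
| simZ_trans : forall t s w,
    simZ Sig H eps Z t s -> simZ Sig H eps Z s w -> simZ Sig H eps Z t w
| simZ_cong : forall n (o : Sig n) (ts ss : Fin.t n -> ftree Sig Z),
    (forall i, simZ Sig H eps Z (ts i) (ss i)) ->
    simZ Sig H eps Z (fnode n o ts) (fnode n o ss).

Definition label (Sig : nat -> Type) (Y : Type) : Type :=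
  (Y + {n : nat & Sig n})%type.

(* a labelled tree as a partial map from positions (paths of child
   indices) to labels *)
Definition rawtree (Sig : nat -> Type) (Y : Type) : Type :=
  list nat -> option (label Sig Y).

Definition wf_tree (Sig : nat -> Type) {Y : Type} (t : rawtree Sig Y) : Prop :=
  t [] <> None /\
  forall p, match t p with
            | None => forall i, t (p ++ [i]) = None
            | Some (inl _) => forall i, t (p ++ [i]) = None
            | Some (inr (existT _ n _)) =>
                forall i, t (p ++ [i]) <> None <-> i < n
            end.

Definition in_T (Sig : nat -> Type) {Y : Type} (t : rawtree Sig Y) : Prop :=
  wf_tree Sig t.

Definition in_C (Sig : nat -> Type) {Y : Type} (t : rawtree Sig Y) : Prop :=
  wf_tree Sig t /\
  exists L : list (list nat), forall p y, t p = Some (inl y) -> In p L.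

Definition tnode (Sig : nat -> Type) {Y : Type} (n : nat) (o : Sig n)
  (ts : Fin.t n -> rawtree Sig Y) : rawtree Sig Y :=
  fun p => match p with
           | [] => Some (inr (existT _ n o))
           | i :: p' => match lt_dec i n with
                        | left h => ts (Fin.of_nat_lt h) p'
                        | right _ => None
                        end
           end.

Definition tleaf (Sig : nat -> Type) {Y : Type} (y : Y) : rawtree Sig Y :=
  fun p => match p with [] => Some (inl y) | _ => None end.

(* cut of the subtree at position p: nodes of relative depth > k deleted,
   those of relative depth k relabelled by bottom (= None) *)
Fixpoint cut_at (Sig : nat -> Type) {Y : Type} (k : nat) (t : rawtree Sig Y)
  (p : list nat) : ftree Sig (option Y) :=
  match k with
  | 0 => fleaf None
  | S k' => match t p with
            | Some (inl y) => fleaf (Some y)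
            | Some (inr (existT _ n o)) =>
                fnode n o (fun i => cut_at Sig k' t (p ++ [proj1_sig (Fin.to_nat i)]))
            | None => fleaf None
            end
  end.

Definition cut (Sig : nat -> Type) {Y : Type} (k : nat) (t : rawtree Sig Y) :
  ftree Sig (option Y) := cut_at Sig k t [].

Definition sim_star (Sig : nat -> Type) (H : Type -> Type)
  (eps : forall X, HSig Sig X -> H X) (Y : Type) (t s : rawtree Sig Y) : Prop :=
  forall k, simZ Sig H eps (option Y) (cut Sig k t) (cut Sig k s).

Definition congruence_on_C (Sig : nat -> Type) (Y : Type)
  (R : rawtree Sig Y -> rawtree Sig Y -> Prop) : Prop :=
  (forall t, in_C Sig t -> R t t) /\
  (forall t s, in_C Sig t -> in_C Sig s -> R t s -> R s t) /\
  (forall t s w, in_C Sig t -> in_C Sig s -> in_C Sig w ->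
     R t s -> R s w -> R t w) /\
  (forall n (o : Sig n) (ts ss : Fin.t n -> rawtree Sig Y),
     (forall i, in_C Sig (ts i) /\ in_C Sig (ss i) /\ R (ts i) (ss i)) ->
     R (tnode Sig n o ts) (tnode Sig n o ss)).

Definition corecursive (H : Type -> Type)
  (map : forall X Z : Type, (X -> Z) -> H X -> H Z)
  (A : Type) (a : H A -> A) : Prop :=
  forall (X : Type) (e : X -> H X),
    exists s : X -> A,
      (forall x, s x = a (map X A s (e x))) /\
      (forall s' : X -> A, (forall x, s' x = a (map X A s' (e x))) ->
         forall x, s' x = s x).

Definition alg_morphism (H : Type -> Type)
  (map : forall X Z : Type, (X -> Z) -> H X -> H Z)
  (A : Type) (a : H A -> A) (B : Type) (b : H B -> B) (h : A -> B) : Prop :=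
  forall u : H A, h (a u) = b (map A B h u).

Definition free_corecursive (H : Type -> Type)
  (map : forall X Z : Type, (X -> Z) -> H X -> H Z)
  (A : Type) (a : H A -> A) (Y : Type) (eta : Y -> A) : Prop :=
  corecursive H map A a /\
  forall (B : Type) (b : H B -> B), corecursive H map B b ->
    forall f : Y -> B,
      exists h : A -> B,
        (alg_morphism H map A a B b h /\ forall y, h (eta y) = f y) /\
        (forall h' : A -> B,
           alg_morphism H map A a B b h' -> (forall y, h' (eta y) = f y) ->
           forall x, h' x = h x).

(* The relation ~*_Y compares trees through their finite cuts, so it is a congruence at
   once.  The heart of the proof is that ~*_Y is determined at the roots: if t ~* t'
   carry operations at their roots, then eps identifies the flat terms of their
   children's classes (the children are finitely many, hence separated by their cuts
   of one fixed depth, and H preserves injections).  Hence the quotient algebra Q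
   satisfies the eps-equations, and every non-variable class x unfolds as x = a u for
   a unique u in H Q.  Corecursivity of Q comes from unfolding a coalgebra into a tree
   without variables.  For freeness, the classes of variable-free trees form a
   subcoalgebra of Q, so the morphism into a corecursive algebra is forced there; every
   other class has a representative whose variables lie above some finite depth, and
   the morphism is extended by induction on that depth. *)

From Stdlib Require Import List Arith Fin Lia.
From Stdlib Require Import Classical ClassicalEpsilon ProofIrrelevance FunctionalExtensionality PropExtensionality.
Import ListNotations.

Section Trees.
Variables (Sig : nat -> Type) (Y : Type).

Definition child (t : rawtree Sig Y) (i : nat) : rawtree Sig Y := fun p => t (i :: p).

Definition root_node (t : rawtree Sig Y) n (o : Sig n) : Prop :=
  t [] = Some (inr (existT _ n o)).

Definition bounded (k : nat) (t : rawtree Sig Y) : Prop :=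
  forall p y, t p = Some (inl y) -> length p < k.

Lemma wf_tree_None_app (t : rawtree Sig Y) p p' :
  wf_tree Sig t -> t p = None -> t (p ++ p') = None.
Proof.
  intros [_ W] Hp. induction p' as [|j p' IH] using rev_ind.
  - now rewrite app_nil_r.
  - rewrite app_assoc. specialize (W (p ++ p')). rewrite IH in W. apply W.
Qed.

Lemma cut_at_cons k (t : rawtree Sig Y) i p :
  cut_at Sig k t (i :: p) = cut_at Sig k (child t i) p.
Proof.
  revert p; induction k as [|k IH]; intros p; simpl; auto.
  unfold child at 1. destruct (t (i :: p)) as [[y|[n o]]|]; auto.
  f_equal. apply functional_extensionality; intros j. now rewrite <- IH.
Qed.

Lemma child_tnode n o (ts : Fin.t n -> rawtree Sig Y) (i : Fin.t n) :
  child (tnode Sig n o ts) (proj1_sig (Fin.to_nat i)) = ts i.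
Proof.
  apply functional_extensionality; intros p. unfold child, tnode.
  destruct (lt_dec (proj1_sig (Fin.to_nat i)) n) as [h|h].
  - f_equal. rewrite <- (Fin.of_nat_to_nat_inv i) at 2. apply Fin.of_nat_ext.
  - exfalso; exact (h (proj2_sig (Fin.to_nat i))).
Qed.

Lemma cut_tnode k n o (ts : Fin.t n -> rawtree Sig Y) :
  cut Sig (S k) (tnode Sig n o ts) = fnode n o (fun i => cut Sig k (ts i)).
Proof.
  unfold cut; simpl. f_equal. apply functional_extensionality; intros i.
  now rewrite cut_at_cons, child_tnode.
Qed.

Lemma tnode_children (t : rawtree Sig Y) n o : wf_tree Sig t -> root_node t n o ->
  t = tnode Sig n o (fun i => child t (proj1_sig (Fin.to_nat i))).
Proof.
  intros Wt Ht. apply functional_extensionality; intros p; destruct p as [|j p]; simpl; auto.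
  destruct (lt_dec j n) as [h|h].
  - unfold child. now rewrite Fin.to_nat_of_nat.
  - apply (wf_tree_None_app t [j] p Wt).
    destruct Wt as [_ W]. specialize (W []). rewrite Ht in W. simpl in W.
    destruct (t [j]) eqn:E; auto. exfalso; apply h, W. simpl; rewrite E; discriminate.
Qed.

Lemma tleaf_root (t : rawtree Sig Y) y : wf_tree Sig t -> t [] = Some (inl y) ->
  t = tleaf Sig y.
Proof.
  intros Wt Ht. apply functional_extensionality; intros p; destruct p as [|j p]; simpl; auto.
  apply (wf_tree_None_app t [j] p Wt).
  destruct Wt as [_ W]. specialize (W []). rewrite Ht in W. apply W.
Qed.

Lemma child_in_C (t : rawtree Sig Y) n o i : in_C Sig t -> root_node t n o -> i < n ->
  in_C Sig (child t i).
Proof.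
  intros [[W0 W] [L HL]] Ht hi. split; [split|].
  - specialize (W []). rewrite Ht in W. now apply W.
  - intros p. exact (W (i :: p)).
  - exists (List.map (@tl nat) L). intros p y Hp.
    change p with (tl (i :: p)). apply in_map, (HL _ y Hp).
Qed.

Definition children (t : rawtree Sig Y) (n : nat) : list (rawtree Sig Y) :=
  List.map (child t) (seq 0 n).

Lemma In_children (t : rawtree Sig Y) n (i : Fin.t n) :
  In (child t (proj1_sig (Fin.to_nat i))) (children t n).
Proof. apply in_map, in_seq. destruct (Fin.to_nat i); simpl; lia. Qed.

Lemma children_in_C (t : rawtree Sig Y) n o d : in_C Sig t -> root_node t n o ->
  In d (children t n) -> in_C Sig d.
Proof.
  intros Ct Ht Hd. apply in_map_iff in Hd. destruct Hd as [i [<- Hi]].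
  apply in_seq in Hi. eapply child_in_C; eauto. lia.
Qed.

Lemma tnode_in_C n o (ts : Fin.t n -> rawtree Sig Y) :
  (forall i, in_C Sig (ts i)) -> in_C Sig (tnode Sig n o ts).
Proof.
  intros HC. split; [split|].
  - discriminate.
  - intros [|j p]; simpl.
    + intros i. destruct (lt_dec i n) as [h|h]; split; intros; try easy.
      apply (HC (Fin.of_nat_lt h)).
    + destruct (lt_dec j n) as [h|h]; [apply (HC (Fin.of_nat_lt h))|easy].
  - assert (F : forall i, {L | forall p y, ts i p = Some (inl y) -> In p L})
      by (intros i; apply constructive_indefinite_description, HC).
    exists (flat_map (fun j => match lt_dec j n with
                               | left h => List.map (cons j) (proj1_sig (F (Fin.of_nat_lt h)))
                               | right _ => [] end) (seq 0 n)).
    intros [|j p] y Hp; simpl in Hp; [discriminate|].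
    destruct (lt_dec j n) as [h|h]; [|discriminate].
    apply in_flat_map. exists j. split; [apply in_seq; lia|].
    destruct (lt_dec j n) as [h'|]; [|contradiction].
    rewrite (proof_irrelevance _ h' h). apply in_map, (proj2_sig (F _) p y Hp).
Qed.

Lemma tleaf_in_C (y : Y) : in_C Sig (tleaf Sig y).
Proof.
  split; [split|].
  - discriminate.
  - intros [|j p]; simpl; auto.
  - exists [[]]. intros [|j p] y' Hp; simpl in *; auto; discriminate.
Qed.

Lemma bounded_child k (t : rawtree Sig Y) i : bounded (S k) t -> bounded k (child t i).
Proof. intros B p y Hp. apply B in Hp. simpl in Hp. lia. Qed.

Lemma bounded_mono k k' (t : rawtree Sig Y) : k <= k' -> bounded k t -> bounded k' t.
Proof. intros Hk B p y Hp. apply B in Hp. lia. Qed.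

Lemma in_C_bounded (t : rawtree Sig Y) : in_C Sig t -> exists k, bounded k t.
Proof.
  intros [_ [L HL]].
  exists (S (list_max (List.map (@length nat) L))). intros p y Hp.
  pose proof (proj1 (list_max_le (List.map (@length nat) L) _) (le_n _)) as F.
  rewrite Forall_forall in F. specialize (F _ (in_map _ _ _ (HL p y Hp))). lia.
Qed.

Fixpoint unfold_at {X : Type} (u : X -> HSig Sig X) (p : list nat) (x : X) :
  option (label Sig Y) :=
  match u x, p with
  | existT _ n (o, _), [] => Some (inr (existT _ n o))
  | existT _ n (_, xs), i :: p' =>
      match lt_dec i n with
      | left h => unfold_at u p' (xs (Fin.of_nat_lt h))
      | right _ => None
      end
  end.

Definition unfold_tree {X : Type} (u : X -> HSig Sig X) (x : X) : rawtree Sig Y :=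
  fun p => unfold_at u p x.

Lemma unfold_tree_tnode {X : Type} (u : X -> HSig Sig X) x :
  unfold_tree u x =
  match u x with existT _ n (o, xs) => tnode Sig n o (fun i => unfold_tree u (xs i)) end.
Proof.
  apply functional_extensionality; intros p. unfold unfold_tree.
  destruct p as [|j p]; simpl; now destruct (u x) as [n [o xs]].
Qed.

Lemma unfold_tree_in_C {X : Type} (u : X -> HSig Sig X) x : in_C Sig (unfold_tree u x).
Proof.
  assert (NoLeaf : forall p x y, unfold_at u p x <> Some (inl y)).
  { induction p as [|j p IH]; intros x' y; simpl; destruct (u x') as [n [o xs]];
      [discriminate|]. destruct (lt_dec j n); [apply IH|discriminate]. }
  assert (Root : forall x, unfold_at u [] x <> None)
    by (intros x'; simpl; destruct (u x') as [n [o xs]]; discriminate).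
  split; [split|].
  - apply Root.
  - unfold unfold_tree. intros p. revert x. induction p as [|j p IH]; intros x'.
    + simpl. destruct (u x') as [n [o xs]]. intros i. simpl.
      destruct (lt_dec i n); [split; auto; intros _; apply Root|split; easy].
    + simpl. destruct (u x') as [n [o xs]]. destruct (lt_dec j n); [apply IH|easy].
  - exists []. intros p y Hp. exfalso; exact (NoLeaf p x y Hp).
Qed.

End Trees.

Section Congruence.
Variables (H : Type -> Type) (map : forall X Z : Type, (X -> Z) -> H X -> H Z)
  (Sig : nat -> Type) (eps : forall X, HSig Sig X -> H X).
Hypothesis eps_natural : forall X Z (f : X -> Z) (u : HSig Sig X),
  eps Z (HSig_map Sig f u) = map X Z f (eps X u).

Section FiniteTrees.
Variable Z : Type.

Local Notation sim := (simZ Sig H eps Z).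

Definition shape_rel {W : Type} (pi : ftree Sig Z -> W) (u v : ftree Sig Z) : Prop :=
  match u, v with
  | fleaf z, fleaf z' => z = z'
  | fnode n o us, fnode m o' vs =>
      eps W (existT _ n (o, fun i => pi (us i))) = eps W (existT _ m (o', fun i => pi (vs i)))
  | _, _ => False
  end.

(* Every generator of [~_Z] is an instance of an eps-equation, so it survives any
   [~_Z]-invariant relabelling [pi] of the arguments. *)
Lemma simZ_shape_rel {W : Type} (pi : ftree Sig Z -> W) :
  (forall u v, sim u v -> pi u = pi v) -> forall u v, sim u v -> shape_rel pi u v.
Proof.
  intros Inv u v S.
  induction S as [V [n [o xs]] [m [o' zs]] th E | [] | [] [] _ IH | [] [] [] _ IH1 _ IH2
                 | n o ts ss HS _]; simpl in *; try easy; try congruence.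
  - change (eps W (HSig_map Sig (fun x => pi (th x)) (existT _ n (o, xs))) =
            eps W (HSig_map Sig (fun x => pi (th x)) (existT _ m (o', zs)))).
    rewrite !eps_natural. f_equal. apply E.
  - do 3 f_equal. apply functional_extensionality; intros i. apply Inv, HS.
Qed.

Lemma simZ_fleaf z v : sim (fleaf z) v -> v = fleaf z.
Proof.
  intros S. pose proof (simZ_shape_rel (fun _ => tt) (fun _ _ _ => eq_refl) _ _ S) as R.
  destruct v; simpl in R; [congruence|contradiction].
Qed.

Definition simZ_class (u : ftree Sig Z) : ftree Sig Z -> Prop := sim u.

Lemma simZ_class_eq u v : sim u v <-> simZ_class u = simZ_class v.
Proof.
  split; intros S.
  - apply functional_extensionality; intros w. apply propositional_extensionality.
    split; intros S'; [eapply simZ_trans; [apply simZ_sym|]|eapply simZ_trans]; eauto.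
  - apply simZ_sym. change (simZ_class v u). rewrite <- S. apply simZ_refl.
Qed.

Variable bot : Z.

Fixpoint trunc (k : nat) (u : ftree Sig Z) : ftree Sig Z :=
  match k, u with
  | 0, _ => fleaf bot
  | S _, fleaf z => fleaf z
  | S k', fnode n o us => fnode n o (fun i => trunc k' (us i))
  end.

Lemma simZ_trunc k u v : sim u v -> sim (trunc k u) (trunc k v).
Proof.
  intros S. revert k.
  induction S as [V [n [o xs]] r th E | t | t s _ IH | t s w _ IH1 _ IH2 | n o ts ss HS IH];
    intros [|k]; try apply simZ_refl.
  - destruct r as [m [o' zs]].
    exact (simZ_ax Sig H eps Z V _ _ (fun x => trunc k (th x)) E).
  - now apply simZ_sym.
  - eapply simZ_trans; eauto.
  - simpl. apply simZ_cong. intros i; apply IH.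
Qed.

End FiniteTrees.

Variable Y : Type.

Local Notation simY := (simZ Sig H eps (option Y)).
Local Notation sim := (sim_star Sig H eps Y).

Lemma trunc_cut_at j k (t : rawtree Sig Y) p : j <= k ->
  trunc (option Y) None j (cut_at Sig k t p) = cut_at Sig j t p.
Proof.
  revert k p; induction j as [|j IH]; intros [|k] p Hjk; simpl; try easy; try lia.
  destruct (t p) as [[y|[n o]]|]; auto.
  f_equal. apply functional_extensionality; intros i. apply IH. lia.
Qed.

Lemma simZ_cut_le j k (t s : rawtree Sig Y) : j <= k ->
  simY (cut Sig k t) (cut Sig k s) -> simY (cut Sig j t) (cut Sig j s).
Proof.
  intros Hjk S. unfold cut in *.
  rewrite <- (trunc_cut_at j k t [] Hjk), <- (trunc_cut_at j k s [] Hjk).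
  now apply simZ_trunc.
Qed.

Lemma sim_star_uniform_depth (ps : list (rawtree Sig Y * rawtree Sig Y)) :
  exists K, forall t s, In (t, s) ps -> simY (cut Sig K t) (cut Sig K s) -> sim t s.
Proof.
  enough (G : exists K0, forall K, K0 <= K -> forall t s, In (t, s) ps ->
                simY (cut Sig K t) (cut Sig K s) -> sim t s).
  { destruct G as [K0 G]. exists K0. now apply G. }
  induction ps as [|[t0 s0] ps [K1 IH]]; [exists 0; easy|].
  destruct (classic (sim t0 s0)) as [S|S].
  - exists K1. intros K HK t s [[= <- <-]|Ht] Sts; auto. apply (IH K); auto.
  - apply not_all_ex_not in S. destruct S as [k Hk].
    exists (K1 + k). intros K HK t s [[= <- <-]|Ht] Sts.
    + exfalso. apply Hk, (simZ_cut_le k K); auto; lia.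
    + apply (IH K); auto; lia.
Qed.

Lemma sim_star_tnode n o (ts ss : Fin.t n -> rawtree Sig Y) :
  (forall i, sim (ts i) (ss i)) -> sim (tnode Sig n o ts) (tnode Sig n o ss).
Proof.
  intros HS [|k]; [apply simZ_refl|].
  rewrite !cut_tnode. apply simZ_cong. intros i; apply HS.
Qed.

Lemma sim_star_congruence : congruence_on_C Sig Y sim.
Proof.
  repeat split.
  - intros t _ k; apply simZ_refl.
  - intros t s _ _ S k; apply simZ_sym, S.
  - intros t s w _ _ _ S1 S2 k; eapply simZ_trans; eauto.
  - intros n o ts ss Hts. apply sim_star_tnode. intros i; apply Hts.
Qed.

Lemma sim_star_tleaf y t : wf_tree Sig t -> sim (tleaf Sig y) t -> t = tleaf Sig y.
Proof.
  intros Wt S. specialize (S 1). apply simZ_fleaf in S. unfold cut in S; simpl in S.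
  destruct (t []) as [[y'|[n o]]|] eqn:E; try discriminate. injection S as ->.
  now apply tleaf_root.
Qed.

End Congruence.

Lemma sig_eq {A : Type} (P : A -> Prop) (e1 e2 : {x : A | P x}) :
  proj1_sig e1 = proj1_sig e2 -> e1 = e2.
Proof. destruct e1, e2; simpl; intros ->; f_equal; apply proof_irrelevance. Qed.

Lemma HSig_map_comp (Sig : nat -> Type) {A B C : Type} (f : A -> B) (g : B -> C) u :
  HSig_map Sig g (HSig_map Sig f u) = HSig_map Sig (fun x => g (f x)) u.
Proof. now destruct u as [n [o xs]]. Qed.

Section Presentation.
Variables (H : Type -> Type) (map : forall X Z : Type, (X -> Z) -> H X -> H Z)
  (Sig : nat -> Type) (eps : forall X, HSig Sig X -> H X).
Hypothesis map_injective : forall A X (f : A -> X), injective f -> injective (map A X f).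
Hypothesis eps_natural : forall X Z (f : X -> Z) (u : HSig Sig X),
  eps Z (HSig_map Sig f u) = map X Z f (eps X u).

(* Since [H] preserves injections, whether [eps] identifies two relabelled flat terms
   depends only on the kernel of the relabelling. *)
Lemma eps_map_kernel {D A B : Type} (alpha : D -> A) (beta : D -> B) :
  (forall d1 d2, alpha d1 = alpha d2 <-> beta d1 = beta d2) ->
  forall l r : HSig Sig D,
    eps B (HSig_map Sig beta l) = eps B (HSig_map Sig beta r) ->
    eps A (HSig_map Sig alpha l) = eps A (HSig_map Sig alpha r).
Proof.
  intros Ker l r E.
  set (P := fun x => exists d, alpha d = x).
  set (pick := fun e : {x | P x} => proj1_sig (constructive_indefinite_description _ (proj2_sig e))).
  assert (pickP : forall e, alpha (pick e) = proj1_sig e)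
    by (intros e; unfold pick; destruct constructive_indefinite_description; auto).
  set (iota := fun d => exist P (alpha d) (ex_intro _ d eq_refl)).
  set (g := fun e => beta (pick e)).
  assert (g_inj : injective g).
  { intros e1 e2 Eg. apply sig_eq. rewrite <- !pickP. now apply Ker. }
  assert (g_iota : forall d, g (iota d) = beta d).
  { intros d. apply Ker. unfold g. now rewrite pickP. }
  assert (Eiota : eps _ (HSig_map Sig iota l) = eps _ (HSig_map Sig iota r)).
  { apply (map_injective _ _ g g_inj). rewrite <- !eps_natural, !HSig_map_comp.
    now rewrite !(functional_extensionality _ _ g_iota). }
  apply (f_equal (map _ A (@proj1_sig _ P))) in Eiota.
  now rewrite <- !eps_natural, !HSig_map_comp in Eiota.
Qed.

Lemma flat_terms_equation {A : Type} (w w' : HSig Sig A) : eps A w = eps A w' ->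
  exists (V : Type) (l r : HSig Sig V) (f : V -> A),
    eps_equation Sig H eps V l r /\ HSig_map Sig f l = w /\ HSig_map Sig f r = w'.
Proof.
  intros E. destruct w as [n [o xs]], w' as [m [o' zs]].
  set (P := fun x => (exists i, xs i = x) \/ (exists i, zs i = x)).
  set (l := existT (fun k => (Sig k * (Fin.t k -> {x | P x}))%type) n
              (o, fun i => exist P (xs i) (or_introl (ex_intro _ i eq_refl)))).
  set (r := existT (fun k => (Sig k * (Fin.t k -> {x | P x}))%type) m
              (o', fun i => exist P (zs i) (or_intror (ex_intro _ i eq_refl)))).
  exists {x | P x}, l, r, (@proj1_sig _ P). repeat split.
  - apply (map_injective _ _ (@proj1_sig _ P)); [intros ? ?; apply sig_eq|].
    now rewrite <- !eps_natural.
  - intros [v [[i Hi]|[i Hi]]]; [left|right]; exists i; now apply sig_eq.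
Qed.

Lemma eps_equations_factor {A : Type} (b : HSig Sig A -> A) :
  (forall X, surjective (eps X)) -> satisfies_eps_equations Sig H eps A b ->
  exists a : H A -> A, forall u, b u = a (eps A u).
Proof.
  intros eps_surj Sat.
  exists (fun u => b (proj1_sig (constructive_indefinite_description _ (eps_surj A u)))).
  intros u. destruct constructive_indefinite_description as [w Hw]; simpl.
  destruct (flat_terms_equation w u Hw) as [V [l [r [f [Eq [<- <-]]]]]].
  symmetry; now apply Sat.
Qed.

End Presentation.

Section Quotient.
Variables (H : Type -> Type) (map : forall X Z : Type, (X -> Z) -> H X -> H Z)
  (Sig : nat -> Type) (eps : forall X, HSig Sig X -> H X).
Hypothesis map_injective : forall A X (f : A -> X), injective f -> injective (map A X f).
Hypothesis eps_natural : forall X Z (f : X -> Z) (u : HSig Sig X),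
  eps Z (HSig_map Sig f u) = map X Z f (eps X u).
Variables (Y Q : Type) (q : rawtree Sig Y -> Q).
Hypothesis q_surj : forall x : Q, exists t, in_C Sig t /\ q t = x.
Hypothesis q_ker : forall t s, in_C Sig t -> in_C Sig s ->
  (q t = q s <-> sim_star Sig H eps Y t s).

Local Notation C := (in_C Sig).
Local Notation sim := (sim_star Sig H eps Y).
Local Notation simY := (simZ Sig H eps (option Y)).

Definition rep (x : Q) : rawtree Sig Y :=
  proj1_sig (constructive_indefinite_description _ (q_surj x)).

Lemma rep_in_C x : C (rep x).
Proof. unfold rep; destruct constructive_indefinite_description as [t Ht]; apply Ht. Qed.

Lemma q_rep x : q (rep x) = x.
Proof. unfold rep; destruct constructive_indefinite_description as [t Ht]; apply Ht. Qed.

Definition quot_op (w : HSig Sig Q) : Q :=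
  match w with existT _ n (o, xs) => q (tnode Sig n o (fun i => rep (xs i))) end.

Lemma q_tnode n o (ts : Fin.t n -> rawtree Sig Y) : (forall i, C (ts i)) ->
  q (tnode Sig n o ts) = quot_op (existT _ n (o, fun i => q (ts i))).
Proof.
  intros Cts. simpl. apply q_ker; try (apply tnode_in_C; intros; apply rep_in_C || apply Cts).
  apply sim_star_tnode. intros i. apply q_ker; auto using rep_in_C. now rewrite q_rep.
Qed.

Lemma quot_op_eps_equations : satisfies_eps_equations Sig H eps Q quot_op.
Proof.
  intros V [n [o xs]] [m [o' zs]] E v. simpl.
  apply q_ker; try (apply tnode_in_C; intros; apply rep_in_C).
  intros [|k]; [apply simZ_refl|]. rewrite !cut_tnode.
  exact (simZ_ax Sig H eps (option Y) V _ _ (fun x => cut Sig k (rep (v x))) E).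
Qed.

Definition is_leaf_class (x : Q) : Prop := exists y, x = q (tleaf Sig y).

Lemma q_tleaf_inv y t : C t -> q t = q (tleaf Sig y) -> t = tleaf Sig y.
Proof.
  intros Ct E. apply (sim_star_tleaf H map Sig eps eps_natural); [apply Ct|].
  apply q_ker; auto using tleaf_in_C.
Qed.

Lemma q_tleaf_inj y y' : q (tleaf Sig y) = q (tleaf Sig y') -> y = y'.
Proof.
  intros E. apply q_tleaf_inv in E; [|apply tleaf_in_C].
  apply (f_equal (fun t => t [])) in E. simpl in E. congruence.
Qed.

Definition child_classes (t : rawtree Sig Y) n (o : Sig n) : HSig Sig Q :=
  existT _ n (o, fun i => q (child Sig Y t (proj1_sig (Fin.to_nat i)))).

(* The children of [t] and [t'] are finitely many, so some depth [K] separates all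
   their [~*]-classes; comparing cuts of depth [K+1] of [t] and [t'] then yields the
   eps-equation between their flat terms of children classes. *)
Lemma child_classes_sim_star t t' n o m o' : C t -> C t' -> sim t t' ->
  root_node Sig Y t n o -> root_node Sig Y t' m o' ->
  eps Q (child_classes t n o) = eps Q (child_classes t' m o').
Proof.
  intros Ct Ct' Stt' Ht Ht'.
  set (ds := children Sig Y t n ++ children Sig Y t' m).
  assert (ds_C : forall d, In d ds -> C d)
    by (intros d [Hd|Hd]%in_app_or; [eapply (children_in_C Sig Y t)|eapply (children_in_C Sig Y t')];
        eauto).
  destruct (sim_star_uniform_depth H Sig eps Y (list_prod ds ds)) as [K HK].
  set (D := {d | In d ds}).
  set (alpha := fun d : D => q (proj1_sig d)).
  set (beta := fun d : D => simZ_class H Sig eps _ (cut Sig K (proj1_sig d))).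
  assert (Ker : forall d1 d2, alpha d1 = alpha d2 <-> beta d1 = beta d2).
  { intros [d1 I1] [d2 I2]. unfold alpha, beta; simpl.
    rewrite q_ker, <- simZ_class_eq by auto. split; [easy|].
    apply HK, in_prod; auto. }
  assert (In_t : forall i, In (child Sig Y t (proj1_sig (Fin.to_nat i))) ds)
    by (intros i; apply in_or_app; left; apply In_children).
  assert (In_t' : forall i, In (child Sig Y t' (proj1_sig (Fin.to_nat i))) ds)
    by (intros i; apply in_or_app; right; apply In_children).
  apply (eps_map_kernel H map Sig eps map_injective eps_natural alpha beta Ker
           (existT _ n (o, fun i => exist (fun d => In d ds) _ (In_t i)))
           (existT _ m (o', fun i => exist (fun d => In d ds) _ (In_t' i)))).
  pose proof (Stt' (S K)) as SK.
  rewrite (tnode_children Sig Y t n o (proj1 Ct) Ht),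
          (tnode_children Sig Y t' m o' (proj1 Ct') Ht'), !cut_tnode in SK.
  apply (simZ_shape_rel H map Sig eps eps_natural _ _
           (fun u v => proj1 (simZ_class_eq H Sig eps _ u v))) in SK.
  exact SK.
Qed.

Hypothesis eps_surj : forall X, surjective (eps X).
Hypothesis map_comp : forall A B D (g : A -> B) (k : B -> D) v,
  map A D (fun z => k (g z)) v = map B D k (map A B g v).
Variable a : H Q -> Q.
Hypothesis a_spec : forall w, quot_op w = a (eps Q w).

Definition node_shape (x : Q) (u : H Q) : Prop :=
  exists t n o, C t /\ q t = x /\ root_node Sig Y t n o /\ eps Q (child_classes t n o) = u.

Lemma node_shape_unique x u u' : node_shape x u -> node_shape x u' -> u = u'.
Proof.
  intros [t [n [o [Ct [<- [Ht <-]]]]]] [t' [m [o' [Ct' [Et' [Ht' <-]]]]]].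
  apply child_classes_sim_star; auto. apply q_ker; auto.
Qed.

Lemma node_shape_alg x u : node_shape x u -> a u = x.
Proof.
  intros [t [n [o [Ct [<- [Ht <-]]]]]]. rewrite <- a_spec. unfold child_classes.
  rewrite <- q_tnode, <- tnode_children; auto.
  - apply Ct.
  - intros i. eapply child_in_C; eauto. exact (proj2_sig (Fin.to_nat i)).
Qed.

Lemma alg_node_shape u : node_shape (a u) u.
Proof.
  destruct (eps_surj Q u) as [[n [o xs]] <-].
  set (t := tnode Sig n o (fun i => rep (xs i))).
  assert (Ct : C t) by (apply tnode_in_C; intros; apply rep_in_C).
  exists t, n, o. split; [exact Ct|split; [|split; [reflexivity|]]].
  - rewrite <- a_spec. unfold t. rewrite q_tnode by (intros; apply rep_in_C).
    do 3 f_equal. apply functional_extensionality; intros i. apply q_rep.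
  - unfold child_classes, t. do 4 f_equal. apply functional_extensionality; intros i.
    now rewrite child_tnode, q_rep.
Qed.

Lemma node_shape_not_leaf x u : node_shape x u -> ~ is_leaf_class x.
Proof.
  intros [t [n [o [Ct [<- [Ht _]]]]]] [y Ey]. apply q_tleaf_inv in Ey; auto.
  subst t. discriminate.
Qed.

Lemma node_shape_lift_unique (P : Q -> Prop) x (v v' : H (sig P)) :
  node_shape x (map _ Q (@proj1_sig _ P) v) -> node_shape x (map _ Q (@proj1_sig _ P) v') ->
  v = v'.
Proof.
  intros S S'. apply (map_injective _ _ (@proj1_sig _ P)); [intros ? ?; apply sig_eq|].
  eapply node_shape_unique; eauto.
Qed.

Lemma quot_corecursive : corecursive H map Q a.
Proof.
  intros X e.
  set (u := fun x => proj1_sig (constructive_indefinite_description _ (eps_surj X (e x)))).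
  assert (Hu : forall x, eps X (u x) = e x)
    by (intros x; unfold u; destruct constructive_indefinite_description; auto).
  set (tr := unfold_tree Sig Y u).
  assert (tr_C : forall x, C (tr x)) by (intros; apply unfold_tree_in_C).
  assert (Fold : forall (s : X -> Q) x,
             a (map X Q s (e x)) =
             match u x with existT _ n (o, xs) => quot_op (existT _ n (o, fun i => s (xs i))) end).
  { intros s x. rewrite <- Hu, <- eps_natural, <- a_spec. now destruct (u x) as [n [o xs]]. }
  exists (fun x => q (tr x)). split.
  - intros x. rewrite Fold. unfold tr. rewrite unfold_tree_tnode.
    destruct (u x) as [n [o xs]]. apply q_tnode. intros; apply tr_C.
  - intros s Hs.
    assert (Cuts : forall k x, simY (cut Sig k (rep (s x))) (cut Sig k (tr x))).
    { induction k as [|k IH]; intros x; [apply simZ_refl|].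
      assert (Sx : q (rep (s x)) =
                   match u x with existT _ n (o, xs) =>
                     q (tnode Sig n o (fun i => rep (s (xs i)))) end).
      { rewrite q_rep, Hs, Fold. destruct (u x) as [n [o xs]].
        rewrite q_tnode by (intros; apply rep_in_C). do 4 f_equal.
        apply functional_extensionality; intros i. now rewrite q_rep. }
      unfold tr. rewrite unfold_tree_tnode. destruct (u x) as [n [o xs]].
      apply q_ker in Sx; [|apply rep_in_C|apply tnode_in_C; intros; apply rep_in_C].
      eapply simZ_trans; [apply (Sx (S k))|]. rewrite !cut_tnode.
      apply simZ_cong. intros i; apply IH. }
    intros x. rewrite <- (q_rep (s x)). apply q_ker; auto using rep_in_C.
    intros k; apply Cuts.
Qed.

Definition bounded_class (k : nat) (x : Q) : Prop :=
  exists t, C t /\ bounded Sig Y k t /\ q t = x.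

Lemma bounded_class_mono k k' x : k <= k' -> bounded_class k x -> bounded_class k' x.
Proof.
  intros Hk [t [Ct [Bt <-]]]. exists t. split; [exact Ct|split; [|reflexivity]].
  now apply (bounded_mono Sig Y k).
Qed.

Lemma bounded_class_S k x : bounded_class k x -> bounded_class (S k) x.
Proof. apply bounded_class_mono; lia. Qed.

Lemma bounded_class_exists x : exists k, bounded_class k x.
Proof.
  destruct (q_surj x) as [t [Ct <-]]. destruct (in_C_bounded Sig Y t Ct) as [k Hk].
  now exists k, t.
Qed.

Lemma bounded_class_0_not_leaf x : bounded_class 0 x -> ~ is_leaf_class x.
Proof.
  intros [t [Ct [Bt <-]]] [y Ey]. apply q_tleaf_inv in Ey; auto. subst t.
  specialize (Bt [] y eq_refl). simpl in Bt. lia.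
Qed.

Lemma bounded_class_unfold k x : bounded_class (S k) x -> ~ is_leaf_class x ->
  exists v : H (sig (bounded_class k)), node_shape x (map _ Q (@proj1_sig _ _) v).
Proof.
  intros [t [Ct [Bt <-]]] NL.
  destruct (t []) as [[y|[n o]]|] eqn:Ht.
  - exfalso. apply NL. exists y. now rewrite (tleaf_root Sig Y t y (proj1 Ct) Ht).
  - assert (Child : forall i : Fin.t n,
               bounded_class k (q (child Sig Y t (proj1_sig (Fin.to_nat i))))).
    { intros i. eexists. split; [|split; [apply bounded_child, Bt|reflexivity]].
      eapply child_in_C; eauto. exact (proj2_sig (Fin.to_nat i)). }
    exists (eps _ (existT _ n (o, fun i => exist _ _ (Child i)))).
    rewrite <- eps_natural. now exists t, n, o.
  - exfalso. exact (proj1 (proj1 Ct) Ht).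
Qed.

Section Freeness.
Variables (B : Type) (b : H B -> B) (B_corec : corecursive H map B b) (f : Y -> B).

Definition widen k (z : sig (bounded_class k)) : sig (bounded_class (S k)) :=
  exist _ (proj1_sig z) (bounded_class_S k _ (proj2_sig z)).

Definition unfold_class k (z : sig (bounded_class (S k)))
  (nl : ~ is_leaf_class (proj1_sig z)) : H (sig (bounded_class k)) :=
  proj1_sig (constructive_indefinite_description _
               (bounded_class_unfold k _ (proj2_sig z) nl)).

Lemma unfold_class_spec k z nl :
  node_shape (proj1_sig z) (map _ Q (@proj1_sig _ _) (unfold_class k z nl)).
Proof. unfold unfold_class. now destruct constructive_indefinite_description. Qed.

Definition coalg0 (z : sig (bounded_class 0)) : H (sig (bounded_class 0)) :=
  unfold_class 0 (widen 0 z) (bounded_class_0_not_leaf _ (proj2_sig z)).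

Lemma coalg0_spec z : node_shape (proj1_sig z) (map _ Q (@proj1_sig _ _) (coalg0 z)).
Proof. exact (unfold_class_spec 0 (widen 0 z) _). Qed.

Definition sol0 : sig (bounded_class 0) -> B :=
  proj1_sig (constructive_indefinite_description _ (B_corec _ coalg0)).

Lemma sol0_eq z : sol0 z = b (map _ B sol0 (coalg0 z)).
Proof. unfold sol0. destruct constructive_indefinite_description as [s Hs]. apply Hs. Qed.

Lemma sol0_unique (s : sig (bounded_class 0) -> B) :
  (forall z, s z = b (map _ B s (coalg0 z))) -> forall z, s z = sol0 z.
Proof. unfold sol0. destruct constructive_indefinite_description as [s0 Hs]. apply Hs. Qed.

Fixpoint hom_at (k : nat) : sig (bounded_class k) -> B :=
  match k with
  | 0 => sol0
  | S k' => fun z =>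
      match excluded_middle_informative (is_leaf_class (proj1_sig z)) with
      | left hy => f (proj1_sig (constructive_indefinite_description _ hy))
      | right nl => b (map _ B (hom_at k') (unfold_class k' z nl))
      end
  end.

Lemma hom_at_leaf k z y : proj1_sig z = q (tleaf Sig y) -> hom_at (S k) z = f y.
Proof.
  intros Ez. simpl. destruct excluded_middle_informative as [hy|hy].
  - destruct constructive_indefinite_description as [y' Ey']; simpl.
    f_equal. apply q_tleaf_inj. congruence.
  - exfalso; apply hy; now exists y.
Qed.

Lemma hom_at_node k z (v : H (sig (bounded_class k))) :
  node_shape (proj1_sig z) (map _ Q (@proj1_sig _ _) v) ->
  hom_at (S k) z = b (map _ B (hom_at k) v).
Proof.
  intros Sv. simpl. destruct excluded_middle_informative as [hy|hy].
  - exfalso. eapply node_shape_not_leaf; eauto.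
  - do 2 f_equal. eapply node_shape_lift_unique; eauto. apply unfold_class_spec.
Qed.

Lemma hom_at_widen k z : hom_at (S k) (widen k z) = hom_at k z.
Proof.
  revert z; induction k as [|k IH]; intros z.
  - rewrite sol0_eq. apply hom_at_node, coalg0_spec.
  - destruct (classic (is_leaf_class (proj1_sig z))) as [[y Ey]|NL].
    + now rewrite !(hom_at_leaf _ _ y).
    + set (v := unfold_class k z NL).
      assert (Sv : node_shape (proj1_sig z) (map _ Q (@proj1_sig _ _) v))
        by apply unfold_class_spec.
      rewrite (hom_at_node (S k) (widen (S k) z) (map _ _ (widen k) v)),
              (hom_at_node k z v Sv) by now rewrite <- map_comp.
      rewrite <- map_comp. do 2 f_equal. apply functional_extensionality, IH.
Qed.

Lemma hom_at_le k k' (z : sig (bounded_class k)) (z' : sig (bounded_class k')) :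
  k <= k' -> proj1_sig z = proj1_sig z' -> hom_at k' z' = hom_at k z.
Proof.
  intros Hk. revert z'. induction Hk as [|k' Hk IH]; intros z' Ez.
  - f_equal. now apply sig_eq.
  - assert (Bz' : bounded_class k' (proj1_sig z'))
      by (rewrite <- Ez; exact (bounded_class_mono _ _ _ Hk (proj2_sig z))).
    rewrite <- (IH (exist _ _ Bz') Ez), <- (hom_at_widen k' (exist _ _ Bz')).
    f_equal. now apply sig_eq.
Qed.

Definition hom (x : Q) : B :=
  let (k, Bk) := constructive_indefinite_description _ (bounded_class_exists x) in
  hom_at k (exist _ x Bk).

Lemma hom_hom_at k z : hom (proj1_sig z) = hom_at k z.
Proof.
  unfold hom. destruct constructive_indefinite_description as [k' Hk']; simpl.
  destruct (le_ge_dec k k'); [|symmetry]; now apply hom_at_le.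
Qed.

Lemma map_hom_proj1 k (v : H (sig (bounded_class k))) :
  map _ B hom (map _ Q (@proj1_sig _ _) v) = map _ B (hom_at k) v.
Proof. rewrite <- map_comp. f_equal. apply functional_extensionality, hom_hom_at. Qed.

Lemma hom_tleaf y : hom (q (tleaf Sig y)) = f y.
Proof.
  assert (B1 : bounded_class 1 (q (tleaf Sig y))).
  { exists (tleaf Sig y). split; [apply tleaf_in_C|split; [|reflexivity]].
    intros [|j p] y' Hp; simpl in *; [lia|discriminate]. }
  change (hom (proj1_sig (exist _ _ B1)) = f y). rewrite (hom_hom_at 1). now apply hom_at_leaf.
Qed.

Lemma hom_alg_morphism : alg_morphism H map Q a B b hom.
Proof.
  intros u. destruct (bounded_class_exists (a u)) as [k Bk].
  set (z := exist _ _ (bounded_class_S k _ Bk)).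
  assert (NL : ~ is_leaf_class (a u)) by apply (node_shape_not_leaf _ _ (alg_node_shape u)).
  destruct (bounded_class_unfold k (a u) (proj2_sig z) NL) as [v Sv].
  change (hom (proj1_sig z) = b (map Q B hom u)).
  rewrite hom_hom_at, (hom_at_node k z v Sv), <- map_hom_proj1.
  do 2 f_equal. eapply node_shape_unique; eauto using alg_node_shape.
Qed.

Lemma hom_unique (h : Q -> B) : alg_morphism H map Q a B b h ->
  (forall y, h (q (tleaf Sig y)) = f y) -> forall x, h x = hom x.
Proof.
  intros Hh Hleaf.
  assert (Hk : forall k z, h (proj1_sig z) = hom_at k z).
  { induction k as [|k IH]; intros z.
    - apply (sol0_unique (fun z => h (proj1_sig z))). intros z'.
      rewrite <- (node_shape_alg _ _ (coalg0_spec z')) at 1.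
      rewrite Hh, <- map_comp. reflexivity.
    - destruct (classic (is_leaf_class (proj1_sig z))) as [[y Ey]|NL].
      + rewrite (hom_at_leaf _ _ y Ey), Ey. apply Hleaf.
      + rewrite (hom_at_node k z _ (unfold_class_spec k z NL)).
        rewrite <- (node_shape_alg _ _ (unfold_class_spec k z NL)) at 1.
        rewrite Hh, <- map_comp. do 2 f_equal. apply functional_extensionality, IH. }
  intros x. destruct (bounded_class_exists x) as [k Bk].
  change (h (proj1_sig (exist _ x Bk)) = hom (proj1_sig (exist _ x Bk))).
  now rewrite hom_hom_at, Hk.
Qed.

End Freeness.

Lemma quot_free_corecursive : free_corecursive H map Q a Y (fun y => q (tleaf Sig y)).
Proof.
  split; [exact quot_corecursive|].
  intros B b B_corec f. exists (hom B b B_corec f). split; [split|].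
  - apply hom_alg_morphism.
  - apply hom_tleaf.
  - apply hom_unique.
Qed.

End Quotient.

Theorem mainTheorem9
  (H : Type -> Type) (map : forall X Z : Type, (X -> Z) -> H X -> H Z)
  (Hfun : is_functor H map) (Hfin : finitary H map) (Hstd : standard H map)
  (Sig : nat -> Type) (eps : forall X, HSig Sig X -> H X)
  (Hpres : presentation Sig H map eps)
  (Y : Type) :
  congruence_on_C Sig Y (sim_star Sig H eps Y) /\
  forall (Q : Type) (q : rawtree Sig Y -> Q),
    (* (Q, q) is the quotient C_Sigma Y / ~*_Y *)
    (forall x : Q, exists t, in_C Sig t /\ q t = x) ->
    (forall t s, in_C Sig t -> in_C Sig s -> (q t = q s <-> sim_star Sig H eps Y t s)) ->
    exists b : HSig Sig Q -> Q,
      (* b is the quotient Sigma-algebra structure: q is a homomorphism *)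
      (forall n (o : Sig n) (ts : Fin.t n -> rawtree Sig Y),
         (forall i, in_C Sig (ts i)) ->
         q (tnode Sig n o ts) = b (existT _ n (o, fun i => q (ts i)))) /\
      satisfies_eps_equations Sig H eps Q b /\
      (exists a : H Q -> Q, forall u, b u = a (eps Q u)) /\
      (forall a : H Q -> Q, (forall u, b u = a (eps Q u)) ->
         free_corecursive H map Q a Y (fun y => q (tleaf Sig y))).
Proof.
  destruct Hstd as [map_inj _], Hpres as [eps_nat eps_surj].
  assert (map_comp : forall A B D (g : A -> B) (k : B -> D) v,
             map A D (fun z => k (g z)) v = map B D k (map A B g v)) by apply Hfun.
  split; [apply sim_star_congruence|].
  intros Q q q_surj q_ker.
  pose proof (quot_op_eps_equations H Sig eps Y Q q q_surj q_ker) as quot_op_sat.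
  exists (quot_op Sig Y Q q q_surj). split; [|split; [|split]].
  - intros n o ts Cts. now apply (q_tnode H Sig eps).
  - exact quot_op_sat.
  - exact (eps_equations_factor H map Sig eps map_inj eps_nat _ eps_surj quot_op_sat).
  - intros a a_spec. eapply (quot_free_corecursive H map Sig eps); eauto.
Qed.
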